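(* Let $M$ be a total deterministic 2-copy tree-to-word transducer with output alphabet $B$ whose axiom is $q_1(x_1)q_2(x_1)$ for states $q_1,q_2$. Then $M$ is balanced (i.e. $\mathcal{L}(M)=\{\varepsilon\}$) if and only if both of the following hold: (1) $\mathcal{L}(q_1)\subseteq A^*$ and $\overline{\mathcal{L}(q_2)}\subseteq A^*$; (2) $q_1$ and $\bar q_2$ are equivalent, i.e. $[\![q_1]\!](t)=[\![\bar q_2]\!](t)$ for all $t\in\mathcal{T}_\Sigma$.
   Context: Let $A$ be a finite alphabet of opening brackets, $\bar A=\{\bar a\mid a\in A\}$ a disjoint copy of closing brackets, and $B=A\cup\bar A$. Extend $\bar{\cdot}$ to an involution on $B^*$ by $\bar\varepsilon=\varepsilon$, $\bar{\bar a}=a$, $\overline{\alpha\beta}=\bar\beta\,\bar\alpha$, and to languages elementwise. The reduction relation on $B^*$ is $\alpha a\bar a\beta\to\alpha\beta$ for $a\in A$ (only $a\bar a$ cancels, not $\bar a a$); $\rho(\alpha)$ denotes the unique irreducible normal form. Let $\Sigma$ be a finite ranked input alphabet and $\mathcal{T}_\Sigma$ the trees over $\Sigma$. A total deterministic 2-copy tree-to-word transducer has a finite set $Q$ of states and, for every $q\in Q$ and $f\in\Sigma$ of rank $m$, exactly one rule $q(f(x_1,\dots,x_m))\to u_0q_1'(x_{\sigma(1)})u_1\cdots q_n'(x_{\sigma(n)})u_n$ with $q_i'\in Q$, $u_i\in B^*$, $n\le m$, $\sigma$ injective. State semantics: $[\![q]\!](f(t_1,\dots,t_m))=\rho(u_0[\![q_1']\!](t_{\sigma(1)})u_1\cdots[\![q_n']\!](t_{\sigma(n)})u_n)$,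 and $\mathcal{L}(q)=\{[\![q]\!](t)\mid t\in\mathcal{T}_\Sigma\}$. With axiom $q_1(x_1)q_2(x_1)$, $[\![M]\!](t)=\rho([\![q_1]\!](t)[\![q_2]\!](t))$ and $\mathcal{L}(M)=\{[\![M]\!](t)\mid t\in\mathcal T_\Sigma\}$. For a state $q$, $\bar q$ denotes the inverse transduction, obtained from a copy of the rules reachable from $q$ by applying the involution to each right-hand side, so that $[\![\bar q]\!](t)=\overline{[\![q]\!](t)}$ for all $t$. *)

From mathcomp Require Import all_boot.
Set Implicit Arguments. Unset Strict Implicit. Unset Printing Implicit Defensive.

(* B = A ∪ Ā : [Op a] is the opening bracket a, [Cl a] the closing bracket ā. *)
Inductive letter (A : Type) := Op of A | Cl of A.
Arguments Op {A} _. Arguments Cl {A} _.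

Definition word (A : Type) := seq (letter A).

Definition is_open (A : Type) (x : letter A) : bool :=
  if x is Op _ then true else false.

Definition bar_letter (A : Type) (x : letter A) : letter A :=
  match x with Op a => Cl a | Cl a => Op a end.
Definition bar (A : Type) (w : word A) : word A := rev (map (@bar_letter A) w).

Inductive red_step (A : Type) : word A -> word A -> Prop :=
  | RedStep (al be : word A) (a : A) : red_step (al ++ [:: Op a; Cl a] ++ be) (al ++ be).

Fixpoint rho_aux (A : eqType) (stk w : word A) : word A :=
  match w with
  | [::] => rev stk
  | x :: w' =>
      match x, stk with
      | Cl b, Op a :: stk' => if a == b then rho_aux stk' w' else rho_aux (x :: stk) w'
      | _, _ => rho_aux (x :: stk) w'
      end
  end.
Definition rho (A : eqType) (w : word A) : word A := rho_aux [::] w.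

Inductive tree (S : Type) := Node of S & seq (tree S).
Arguments Node {S} _ _.

Fixpoint well_ranked (S : Type) (rank : S -> nat) (t : tree S) : bool :=
  match t with Node f ts => (size ts == rank f) && all (well_ranked rank) ts end.

(* A right-hand side  u0 q1'(x_{σ(1)}) u1 ... qn'(x_{σ(n)}) un  is represented by
   (u0, [:: (q1', σ(1)-1, u1); ...; (qn', σ(n)-1, un)])  (variable indices 0-based). *)
Definition rhs (A Q : Type) := (word A * seq (Q * nat * word A))%type.

Record transducer (A S Q : finType) (rank : S -> nat) := Transducer {
  rule : Q -> S -> rhs A Q;
  rule_wf : forall q f,
     all (fun it : Q * nat * word A => it.1.2 < rank f) (rule q f).2 /\
     uniq (map (fun it : Q * nat * word A => it.1.2) (rule q f).2)
}.

Section Sem.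
Variables (A S Q : finType) (R : Q -> S -> rhs A Q).

Fixpoint sem_all (t : tree S) : Q -> word A :=
  match t with
  | Node f ts =>
      let child := map sem_all ts in
      fun q =>
        let r := R q f in
        rho (r.1 ++ flatten
               (map (fun it : Q * nat * word A =>
                       nth (fun _ => [::]) child it.1.2 it.1.1 ++ it.2) r.2))
  end.
End Sem.

Definition sem (A S Q : finType) (rank : S -> nat) (M : transducer A Q rank)
  (q : Q) (t : tree S) : word A := sem_all (rule M) t q.

(* the inverse rules: bar of each right-hand side,
   bar(u0 q1 u1 ... qn un) = bar un  q̄n  bar u(n-1) ... q̄1 bar u0 *)
Definition bar_rhs (A Q : Type) (r : rhs A Q) : rhs A Q :=
  let us := map (fun it : Q * nat * word A => it.2) r.2 in
  let qs := map (fun it : Q * nat * word A => it.1) r.2 in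
  (bar (last r.1 us), rev (zip qs (map (@bar A) (belast r.1 us)))).

Definition sem_bar (A S Q : finType) (rank : S -> nat) (M : transducer A Q rank)
  (q : Q) (t : tree S) : word A := sem_all (fun q f => bar_rhs (rule M q f)) t q.

Definition sem_M (A S Q : finType) (rank : S -> nat) (M : transducer A Q rank)
  (q1 q2 : Q) (t : tree S) : word A := rho (sem M q1 t ++ sem M q2 t).

Definition balanced (A S Q : finType) (rank : S -> nat) (M : transducer A Q rank)
  (q1 q2 : Q) : Prop :=
  (forall t, well_ranked rank t -> sem_M M q1 q2 t = [::]) /\
  (exists t, well_ranked rank t).

From Stdlib Require List.
From mathcomp Require Import all_boot.
Set Implicit Arguments. Unset Strict Implicit. Unset Printing Implicit Defensive.

(* [rho] reads a word left to right through a stack, and replaying the stack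
   of a word has the same effect as replaying the word itself.  Hence [rho] is
   compatible with concatenation on both sides and invariant under reduction
   steps; as [bar] maps reduction steps to reduction steps and irreducible
   words to irreducible words, [rho] commutes with [bar], so that the inverse
   transduction computes [bar] of the original one.
   Now let u and v be irreducible with u v reducing to the empty word.  A
   closing bracket of u has nothing to its left to cancel with, so u is in A*,
   and symmetrically bar v is in A*; the brackets are then matched from the
   middle outwards, which forces u = bar v.  Conversely u bar u reduces to the
   empty word whenever u is in A*. *)

Section Bar.
Variable A : Type.
Implicit Types (u v w : word A) (x : letter A).

Lemma bar_cat u v : bar (u ++ v) = bar v ++ bar u.
Proof. by rewrite /bar map_cat rev_cat. Qed.

Lemma barK : involutive (@bar A).
Proof.
move=> w; rewrite /bar map_rev revK -map_comp -[RHS]map_id.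
by apply: eq_map; case.
Qed.

Lemma bar_rcons w x : bar (rcons w x) = bar_letter x :: bar w.
Proof. by rewrite /bar map_rcons rev_rcons. Qed.

End Bar.

Section Words.
Variable A : eqType.
Implicit Types (s u v w : word A) (x y : letter A).

Definition push s x : word A :=
  match x, s with
  | Cl b, Op a :: s' => if a == b then s' else x :: s
  | _, _ => x :: s
  end.

Definition stack w := foldl push [::] w.

Definition cancels x y := if (x, y) is (Op a, Cl b) then a == b else false.

Definition irreducible w := sorted (fun x y => ~~ cancels x y) w.

Lemma rho_auxE s w : rho_aux s w = rev (foldl push s w).
Proof.
elim: w s => [//|x w IH] s /=.
by case: x => [a|b]; case: s => [|[a'|a'] s] //=; case: ifP.
Qed.

Lemma rhoE w : rho w = rev (stack w).
Proof. exact: rho_auxE. Qed.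

Lemma foldl_push_rev_push s n x :
  foldl push s (rev (push n x)) = push (foldl push s (rev n)) x.
Proof.
case: x => [a|b]; first by rewrite /= rev_cons foldl_rcons.
case: n => [|[a|a] n] //=; last by rewrite rev_cons foldl_rcons.
case: ifP => [/eqP <-|_]; last by rewrite !rev_cons !foldl_rcons.
by rewrite rev_cons !foldl_rcons /= eqxx.
Qed.

Lemma foldl_push_rev_stack s w : foldl push s (rev (stack w)) = foldl push s w.
Proof.
elim/last_ind: w s => [//|w x IH] s.
by rewrite /stack !foldl_rcons foldl_push_rev_push IH.
Qed.

Lemma rho_catl u v : rho (rho u ++ v) = rho (u ++ v).
Proof. by rewrite !rhoE /stack !foldl_cat foldl_push_rev_stack. Qed.

Lemma rho_catr u v : rho (u ++ rho v) = rho (u ++ v).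
Proof. by rewrite !rhoE /stack !foldl_cat foldl_push_rev_stack. Qed.

Lemma rho_idem w : rho (rho w) = rho w.
Proof. by rewrite -[rho w in LHS]cats0 rho_catl cats0. Qed.

Lemma rho_red_step w w' : red_step w w' -> rho w = rho w'.
Proof.
case=> al be a; rewrite -rho_catr -[in RHS]rho_catr.
by rewrite /rho /= eqxx.
Qed.

Lemma red_step_bar w w' : red_step w w' -> red_step (bar w) (bar w').
Proof.
by case=> al be a; rewrite !bar_cat -catA; apply: RedStep.
Qed.

Lemma irreducible_bar w : irreducible (bar w) = irreducible w.
Proof.
rewrite /irreducible /bar rev_sorted sorted_map; case: w => [//|x w] /=.
by apply: eq_path => -[a|a] [b|b] //=; rewrite /cancels eq_sym.
Qed.

Lemma foldl_push_irreducible s x r :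
  path (fun x y => ~~ cancels x y) x r -> foldl push (x :: s) r = rev r ++ x :: s.
Proof.
elim: r x s => [//|y r IH] x s /= /andP [nxy xr].
have -> : push (x :: s) y = y :: x :: s.
  by case: x nxy => a; case: y {xr} => b //; rewrite /cancels /= => /negbTE ->.
by rewrite IH // rev_cons cat_rcons.
Qed.

Lemma rho_id w : irreducible w -> rho w = w.
Proof.
case: w => [//|x r] irr; rewrite rhoE /stack /=.
have -> : push [::] x = [:: x] by case: x {irr}.
by rewrite foldl_push_irreducible // rev_cat revK.
Qed.

Lemma reducible_split w :
  ~~ irreducible w -> exists al be a, w = al ++ [:: Op a; Cl a] ++ be.
Proof.
elim: w => [|x [|y w] IH] //=; rewrite negb_and negbK => /orP [cxy | /IH].
- case: x cxy => a; case: y {IH} => b //; rewrite /cancels => /eqP <-.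
  by exists [::], w, a.
- by case=> al [be [a ->]]; exists (x :: al), be, a.
Qed.

Lemma rho_bar w : rho (bar w) = bar (rho w).
Proof.
have [n] := ubnP (size w); elim: n w => // n IH w /ltnSE-le_w_n.
have [irr | /reducible_split [al [be [a Ew]]]] := boolP (irreducible w).
  by rewrite !rho_id ?irreducible_bar.
have st : red_step w (al ++ be) by rewrite Ew; apply: RedStep.
rewrite (rho_red_step st) (rho_red_step (red_step_bar st)) IH //.
by apply: leq_trans le_w_n; rewrite Ew !size_cat /= !addnS ltnS leqnSn.
Qed.

Lemma push_not_open s x : ~~ all (@is_open A) s -> ~~ all (@is_open A) (push s x).
Proof. by case: x => [a|b]; case: s => [|[a'|a'] s] //=; case: ifP. Qed.

Lemma foldl_push_not_open s w :
  ~~ all (@is_open A) s -> ~~ all (@is_open A) (foldl push s w).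
Proof. by elim: w s => [//|x w IH] s /= /(push_not_open x); apply: IH. Qed.

Lemma foldl_push_open s u : all (@is_open A) u -> foldl push s u = rev u ++ s.
Proof.
by elim: u s => [//|[a|a] u IH] s //= ou; rewrite IH // rev_cons cat_rcons.
Qed.

Lemma rho_open u : all (@is_open A) u -> rho u = u.
Proof. by move=> ou; rewrite rhoE /stack foldl_push_open // cats0 revK. Qed.

Lemma rho_cat_nil_openl u v : rho (u ++ v) = [::] -> all (@is_open A) (rho u).
Proof.
rewrite !rhoE all_rev /stack foldl_cat => /(congr1 rev); rewrite revK.
by move=> uv0; apply: contraT => /(foldl_push_not_open v); rewrite uv0.
Qed.

Lemma rho_cat_nil_openr u v : rho (u ++ v) = [::] -> all (@is_open A) (bar (rho v)).
Proof.
move=> uv0; rewrite -rho_bar; apply: (@rho_cat_nil_openl _ (bar u)).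
by rewrite -bar_cat rho_bar uv0.
Qed.

Lemma rho_open_cat_bar u : all (@is_open A) u -> rho (u ++ bar u) = [::].
Proof.
elim/last_ind: u => [//|u x IH]; rewrite all_rcons => /andP [+ ou].
case: x => // a _; rewrite bar_rcons cat_rcons.
by rewrite (rho_red_step (RedStep u (bar u) a)) IH.
Qed.

Lemma open_cat_bar_eq u w : all (@is_open A) u -> all (@is_open A) w ->
  rho (u ++ bar w) = [::] -> u = w.
Proof.
elim/last_ind: w u => [|w y IH] u ou; first by rewrite cats0 rho_open.
rewrite all_rcons => /andP [+ ow]; case: y => // b _.
rewrite bar_rcons /=; case/lastP: u ou => [_ | u x].
  by move=> /(@rho_cat_nil_openl [:: Cl b]).
rewrite all_rcons => /andP [+ ou]; case: x => // a _.
have [<- | neq_ab] := eqVneq a b.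
  by rewrite cat_rcons (rho_red_step (RedStep u (bar w) a)) => /IH ->.
rewrite cat_rcons -[_ :: _]/([:: Op a; Cl b] ++ bar w) catA => /rho_cat_nil_openl.
rewrite rhoE /stack foldl_cat (foldl_push_open _ ou) /=.
by rewrite (negbTE neq_ab) all_rev.
Qed.

Lemma rho_cat_eq_nil u v : rho u = u -> rho v = v ->
  rho (u ++ v) = [::] <->
  [/\ all (@is_open A) u, all (@is_open A) (bar v) & u = bar v].
Proof.
move=> irr_u irr_v; split=> [uv0 | [_ ov ->]]; last first.
  by rewrite -[v in _ ++ v]barK rho_open_cat_bar.
have ou : all (@is_open A) u by rewrite -irr_u; apply: rho_cat_nil_openl uv0.
have ov : all (@is_open A) (bar v) by rewrite -irr_v; apply: rho_cat_nil_openr uv0.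
by split=> //; apply: open_cat_bar_eq; rewrite ?barK.
Qed.

End Words.

Section Fill.
Variables A Q : Type.

Definition fill (r : rhs A Q) (h : Q * nat -> word A) : word A :=
  r.1 ++ flatten (map (fun it : Q * nat * word A => h it.1 ++ it.2) r.2).

Lemma eq_fill r h h' : h =1 h' -> fill r h = fill r h'.
Proof.
move=> eq_h; rewrite /fill; congr (_ ++ flatten _).
by apply: eq_map => it; rewrite eq_h.
Qed.

Lemma bar_fill r h : bar (fill r h) = fill (bar_rhs r) (fun p => bar (h p)).
Proof.
case: r => u0 items; rewrite /fill /bar_rhs /=.
elim: items u0 => [|[p u1] items IH] u0 /=; first by rewrite !cats0.
by rewrite rev_cons map_rcons flatten_rcons [in RHS]catA -IH !bar_cat /= !catA.
Qed.

End Fill.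

Fixpoint tree_ind_Forall (S : Type) (P : tree S -> Prop)
    (IH : forall f ts, List.Forall P ts -> P (Node f ts)) t : P t :=
  let: Node f ts := t in
  IH f ts ((fix all_P ts : List.Forall P ts :=
              if ts is t :: ts'
              then List.Forall_cons t (tree_ind_Forall IH t) (all_P ts')
              else List.Forall_nil P) ts).

Section Transducers.
Variables (A S Q : finType).

Lemma sem_all_Node (R : Q -> S -> rhs A Q) f ts q :
  sem_all R (Node f ts) q =
  rho (fill (R q f) (fun p => nth (fun _ => [::]) (map (sem_all R) ts) p.2 p.1)).
Proof. by []. Qed.

Lemma sem_all_bar_rhs (R : Q -> S -> rhs A Q) t q :
  sem_all (fun q f => bar_rhs (R q f)) t q = bar (sem_all R t q).
Proof.
elim/tree_ind_Forall: t q => f ts IH q.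
rewrite !sem_all_Node -rho_bar bar_fill; congr rho; apply: eq_fill => -[q' i] /=.
by elim: IH i => [|t ts' IHt _ IHts] [|i] /=.
Qed.

Variables (rank : S -> nat) (M : transducer A Q rank).

Lemma rho_sem q t : rho (sem M q t) = sem M q t.
Proof. by case: t => f ts; apply: rho_idem. Qed.

Lemma sem_barE q t : sem_bar M q t = bar (sem M q t).
Proof. exact: sem_all_bar_rhs. Qed.

End Transducers.

Theorem proposition1 (A S Q : finType) (rank : S -> nat)
  (M : transducer A Q rank) (q1 q2 : Q)
  (HSigma : exists t : tree S, well_ranked rank t) :
  balanced M q1 q2 <->
  ((forall t, well_ranked rank t -> all (@is_open A) (sem M q1 t)) /\
   (forall t, well_ranked rank t -> all (@is_open A) (bar (sem M q2 t)))) /\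
  (forall t, well_ranked rank t -> sem M q1 t = sem_bar M q2 t).
Proof.
have sem_M_nil t : sem_M M q1 q2 t = [::] <->
    [/\ all (@is_open A) (sem M q1 t), all (@is_open A) (bar (sem M q2 t))
      & sem M q1 t = sem_bar M q2 t].
  by rewrite sem_barE; apply: rho_cat_eq_nil; apply: rho_sem.
split=> [[bal _] | [[open1 open2] eq12]].
  by split; first split; move=> t /bal /sem_M_nil [].
split=> // t wt; apply/sem_M_nil.
by split; [exact: open1 | exact: open2 | exact: eq12].
Qed.
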